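(* Consider two user types $k\in\{1,2\}$ (write $-k$ for the other type), with $N_k$ users of type $k$, individual arrival rate $\lambda_k$, departure rate $\mu_k$, and instantaneous utility of use $u_k(\tau)=\alpha_k-\beta_k/\tau$. Suppose the service provider uses TDMA, has no admission control (every arriving user is admitted), and offers the pricing policy $\mathbf P=(\phi,(p_s,q))$. When the other users play according to the profile $\pi=(\pi_1,\pi_2)$, $\pi_j=[\pi_{j,0},\pi_{j,1}]$, the expected utility of use and expected cost of a particular type-$k$ user playing $\pi_k'=[\pi_{k,0}',\pi_{k,1}']$ are $$U_k(\theta,\alpha,(\pi;\pi_k'))=\pi_{k,1}'\,\Delta T\,\frac{\lambda_k}{\lambda_k+\mu_k}\Big[\alpha_k-\beta_k\Big(1+\frac{\lambda_k(N_k-1)}{\lambda_k+\mu_k}\pi_{k,1}+\frac{\lambda_{-k}N_{-k}}{\lambda_{-k}+\mu_{-k}}\pi_{-k,1}\Big)\Big]$$ and $$C_k(\theta,\alpha,\mathbf P,(\pi;\pi_k'))=\pi_{k,1}'\big(p_s+q\,\hat B_k(\theta,\alpha,\pi)\big),$$ where $$\hat B_k(\theta,\alpha,\pi)=\sum_{n_{k,1}=1}^{N_k}\sum_{n_{-k,1}=0}^{N_{-k}}\binom{N_k-1}{n_{k,1}-1}\pi_{k,1}^{n_{k,1}-1}(1-\pi_{k,1})^{N_k-n_{k,1}}\binom{N_{-k}}{n_{-k,1}}\pi_{-k,1}^{n_{-k,1}}(1-\pi_{-k,1})^{N_{-k}-n_{-k,1}}B_k^1(\theta,\alpha,\mathbf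 n),$$ with $B_k^1(\theta,\alpha,\mathbf n)=\Delta T\sum_{\mathbf x}\Pr(\mathbf X(\infty)=\mathbf x)\frac{x_{k,1}}{n_{k,1}}\tau_{k,1}(\mathbf x)$ and $\tau_{k,1}(\mathbf x)=\frac{1}{x_{k,1}+x_{-k,1}}$.
   Context: Plan $0$ is the dummy plan $\phi$ (no subscription); plan $1$ charges subscription fee $p_s\ge0$ per billing period of length $\Delta T$ plus $q\ge0$ per unit of guaranteed data rate. Each type-$k$ user independently chooses plan $1$ with probability $\pi_{k,1}$ (the particular user with probability $\pi_{k,1}'$), fixed thereafter; the realization gives $n_{j,1}$ type-$j$ users on plan $1$ ($\mathbf n=(n_{1,1},n_{2,1})$). Given $\mathbf n$, each plan-1 user alternates: while offline it arrives after an exponential time of rate $\lambda_j$, while online it departs after an exponential time of rate $\mu_j$, independently; $\mathbf X(\infty)$ denotes the steady-state system state, with $x_{j,1}$ online type-$j$ plan-1 users. Under TDMA with normalized bandwidth $1$ the bandwidth is shared equally, so an online user's guaranteed throughput is $\tau(\mathbf x)=1/(x_{1,1}+x_{2,1})$. Definitions: $V_k^1(\mathbf n)=\Delta T\sum_{\mathbf x}\Pr(\mathbf X(\infty)=\mathbf x)\frac{x_{k,1}}{n_{k,1}}u_k(\tau(\mathbf x))$; $U_k(\theta,\alpha,(\pi;\pi_k'))=\pi_{k,1}'\sum_{\mathbf n:n_{k,1}\ge1}\Pr(\mathbf n\mid k,1)V_k^1(\mathbf n)$ and $C_k(\theta,\alpha,\mathbf P,(\pi;\pi_k'))=\pi_{k,1}'\big(p_s+\sum_{\mathbf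 n:n_{k,1}\ge1}\Pr(\mathbf n\mid k,1)\,q\,B_k^1(\theta,\alpha,\mathbf n)\big)$, where $\Pr(\mathbf n\mid k,1)$ is the probability of the realization $\mathbf n$ given that the particular user chose plan $1$ (the other users choosing independently according to $\pi$). *)

From HB Require Import structures.
From mathcomp Require Import all_boot all_order all_algebra.
Set Implicit Arguments. Unset Strict Implicit. Unset Printing Implicit Defensive.
Import Order.TTheory GRing.Theory Num.Theory.
Local Open Scope ring_scope.

(* User types are indexed by bool: [true] = type 1, [false] = type 2;
   the other type [-k] is [~~ k].  Pairs (a,b) of counts are always given
   in LABELED coordinates (type 1, type 2).  [sel k a b] is the type-k
   component of the labeled pair (a,b). *)
Definition sel {T} (k : bool) (a b : T) : T := if k then a else b.

Section Model.
Variable R : realFieldType.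

(* Stationary distribution of the CTMC of online users given n = (n1,n2):
   state (a,b) = (#online type-1, #online type-2) plan-1 users; each offline
   type-j user comes online at rate lam j, each online one leaves at rate mu j.
   [p a b] is the stationary probability Pr(X(oo) = (a,b)); it is
   characterised by support / nonnegativity / normalisation / global balance. *)
Definition is_stationary (lam mu : bool -> R) (n1 n2 : nat)
    (p : nat -> nat -> R) : Prop :=
  [/\ (forall a b, (n1 < a)%N \/ (n2 < b)%N -> p a b = 0),
      (forall a b, (a <= n1)%N -> (b <= n2)%N -> 0 <= p a b),
      \sum_(a < n1.+1) \sum_(b < n2.+1) p a b = 1 &
      (forall a b, (a <= n1)%N -> (b <= n2)%N ->
        p a b * ((n1 - a)%:R * lam true + a%:R * mu true
                 + (n2 - b)%:R * lam false + b%:R * mu false)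
        = (if a is a'.+1 then p a' b * (n1 - a')%:R * lam true else 0)
          + p a.+1 b * (a.+1)%:R * mu true
          + (if b is b'.+1 then p a b' * (n2 - b')%:R * lam false else 0)
          + p a b.+1 * (b.+1)%:R * mu false)].

Definition tau (a b : nat) : R := 1 / (a + b)%:R.

Definition util (alpha beta : bool -> R) (k : bool) (t : R) : R :=
  alpha k - beta k / t.

Definition V1 (alpha beta : bool -> R) (dT : R)
    (pst : nat -> nat -> nat -> nat -> R) (k : bool) (n1 n2 : nat) : R :=
  dT * \sum_(a < n1.+1) \sum_(b < n2.+1)
        pst n1 n2 a b * ((sel k (a : nat) (b : nat))%:R / (sel k n1 n2)%:R)
        * util alpha beta k (tau a b).

Definition B1 (dT : R) (pst : nat -> nat -> nat -> nat -> R)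
    (k : bool) (n1 n2 : nat) : R :=
  dT * \sum_(a < n1.+1) \sum_(b < n2.+1)
        pst n1 n2 a b * ((sel k (a : nat) (b : nat))%:R / (sel k n1 n2)%:R) * tau a b.

Definition choice_prob (p : R) (c : bool) : R := if c then p else 1 - p.

(* Pr(n | k, 1): the particular type-k user chose plan 1; the other
   N_k - 1 type-k users and the N_{-k} type-(-k) users choose plan 1
   independently with probabilities pi1 k, pi1 (~~k); n = (n1,n2) labeled. *)
Definition prob_n_given (N : bool -> nat) (pi1 : bool -> R) (k : bool)
    (n1 n2 : nat) : R :=
  \sum_(c : {ffun 'I_(N k).-1 -> bool})
   \sum_(d : {ffun 'I_(N (~~ k)) -> bool})
    (if (sel k n1 n2 == (\sum_i nat_of_bool (c i)).+1)%N
        && (sel k n2 n1 == \sum_i nat_of_bool (d i))%N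
     then (\prod_i choice_prob (pi1 k) (c i))
          * \prod_i choice_prob (pi1 (~~ k)) (d i)
     else 0).

Definition Uk (N : bool -> nat) (pi1 : bool -> R) (pik' : R)
    (alpha beta : bool -> R) (dT : R) (pst : nat -> nat -> nat -> nat -> R)
    (k : bool) : R :=
  pik' * \sum_(n1 < (N true).+1) \sum_(n2 < (N false).+1)
    (if (1 <= sel k (n1 : nat) (n2 : nat))%N
     then prob_n_given N pi1 k n1 n2 * V1 alpha beta dT pst k n1 n2 else 0).

Definition Ck (N : bool -> nat) (pi1 : bool -> R) (pik' : R)
    (ps q dT : R) (pst : nat -> nat -> nat -> nat -> R) (k : bool) : R :=
  pik' * (ps + \sum_(n1 < (N true).+1) \sum_(n2 < (N false).+1)
    (if (1 <= sel k (n1 : nat) (n2 : nat))%N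
     then prob_n_given N pi1 k n1 n2 * (q * B1 dT pst k n1 n2) else 0)).

Definition Bhat (N : bool -> nat) (pi1 : bool -> R) (dT : R)
    (pst : nat -> nat -> nat -> nat -> R) (k : bool) : R :=
  \sum_(1 <= a < (N k).+1) \sum_(0 <= b < (N (~~ k)).+1)
    ('C((N k).-1, a.-1)%:R * pi1 k ^+ a.-1 * (1 - pi1 k) ^+ (N k - a)
     * 'C(N (~~ k), b)%:R * pi1 (~~ k) ^+ b * (1 - pi1 (~~ k)) ^+ (N (~~ k) - b)
     * B1 dT pst k (sel k a b) (sel k b a)).

End Model.

From HB Require Import structures.
From mathcomp Require Import all_boot all_order all_algebra.
From mathcomp.algebra_tactics Require Import ring.
Set Implicit Arguments. Unset Strict Implicit. Unset Printing Implicit Defensive.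
Import Order.TTheory GRing.Theory Num.Theory.
Local Open Scope ring_scope.

(* Given n, the numbers of online users form a birth-death chain whose
   stationary law p satisfies E_p[Q f] = 0 for every test function f, Q the
   rate operator.  Taking f = a, a^2 and a*b gives the binomial moments
   E[a] = n_1 r_1, E[a^2] = n_1 r_1 (1 + (n_1 - 1) r_1), E[a b] = n_1 r_1 n_2 r_2,
   with r_j = lam_j / (lam_j + mu_j).  Under TDMA, x_k u_k(tau(x)) / n_k =
   (alpha_k x_k - beta_k x_k (x_1 + x_2)) / n_k is quadratic in the state, so
   V_k^1(n) depends only on these moments and is affine in n.  Given that the
   particular user subscribed, the other plan-1 users are binomially
   distributed, so averaging over n amounts to replacing n by its mean.  The
   cost identity only needs Pr(n | k, 1) as a product of binomial weights. *)

Section StationaryExpectation.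
Variable R : realFieldType.
Implicit Types (lam mu : bool -> R) (p f g : nat -> nat -> R).

Definition expect n1 n2 p f : R := \sum_(a < n1.+1) \sum_(b < n2.+1) p a b * f a b.

(* The rate operator of the online-user chain; at [a = 0] the junk value
   [a.-1 = 0] is harmless because it is weighted by the rate [a * mu]. *)
Definition generator lam mu n1 n2 f (a b : nat) : R :=
  (n1 - a)%:R * lam true * (f a.+1 b - f a b) + a%:R * mu true * (f a.-1 b - f a b)
  + (n2 - b)%:R * lam false * (f a b.+1 - f a b) + b%:R * mu false * (f a b.-1 - f a b).

Lemma eq_expect n1 n2 p f g :
  (forall a b, (a <= n1)%N -> (b <= n2)%N -> f a b = g a b) ->
  expect n1 n2 p f = expect n1 n2 p g.
Proof.
move=> efg; apply: eq_bigr => a _; apply: eq_bigr => b _.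
by rewrite efg // -ltnS.
Qed.

Lemma expectD n1 n2 p f g :
  expect n1 n2 p (fun a b => f a b + g a b) = expect n1 n2 p f + expect n1 n2 p g.
Proof.
rewrite -big_split; apply: eq_bigr => a _; rewrite -big_split.
by apply: eq_bigr => b _; rewrite mulrDr.
Qed.

Lemma expectZ n1 n2 p c f :
  expect n1 n2 p (fun a b => c * f a b) = c * expect n1 n2 p f.
Proof.
rewrite mulr_sumr; apply: eq_bigr => a _; rewrite mulr_sumr.
by apply: eq_bigr => b _; rewrite mulrCA.
Qed.

Lemma big_ord_shift_up n (F : nat -> nat -> R) : F n n.+1 = 0 ->
  \sum_(i < n.+1) F i i.+1 = \sum_(i < n.+1) (if (i : nat) is i'.+1 then F i' i else 0).
Proof. by move=> Fn0; rewrite big_ord_recr /= Fn0 addr0 big_ord_recl /= add0r. Qed.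

Lemma big_ord_shift_down n (F : nat -> nat -> R) : F 0%N 0%N = 0 -> F n.+1 n = 0 ->
  \sum_(i < n.+1) F i i.-1 = \sum_(i < n.+1) F i.+1 i.
Proof.
by move=> F00 Fn0; rewrite big_ord_recl /= F00 add0r big_ord_recr /= Fn0 addr0.
Qed.

Definition online_prob lam mu (j : bool) : R := lam j / (lam j + mu j).

Lemma solve_linear (c d x : R) : d + c * x = 0 -> c != 0 -> x = - d / c.
Proof. by move=> /eqP; rewrite addr_eq0 => /eqP -> c0; rewrite opprK [c * x]mulrC mulfK. Qed.

Variables (lam mu : bool -> R) (n1 n2 : nat) (p : nat -> nat -> R).
Hypothesis p_stat : is_stationary lam mu n1 n2 p.

Lemma expect1 : expect n1 n2 p (fun _ _ => 1) = 1.
Proof.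
case: p_stat => _ _ p_sum1 _; rewrite -[RHS]p_sum1; apply: eq_bigr => a _.
by apply: eq_bigr => b _; rewrite /= mulr1.
Qed.

Lemma expect_generator f : expect n1 n2 p (generator lam mu n1 n2 f) = 0.
Proof.
case: p_stat => p_supp _ _ p_bal.
pose inflow a b := (if a is a'.+1 then p a' b * (n1 - a')%:R * lam true else 0)
  + p a.+1 b * a.+1%:R * mu true
  + (if b is b'.+1 then p a b' * (n2 - b')%:R * lam false else 0)
  + p a b.+1 * b.+1%:R * mu false.
(* Global balance turns the outflow part of [E[Q f]] into [f] weighted by the
   inflow; reindexing the four kinds of jumps shows the remaining part is that
   same sum. *)
have -> : expect n1 n2 p (generator lam mu n1 n2 f) =
    \sum_(a < n1.+1) \sum_(b < n2.+1)
      (p a b * (n1 - a)%:R * lam true * f a.+1 b + p a b * a%:R * mu true * f a.-1 b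
       + p a b * (n2 - b)%:R * lam false * f a b.+1 + p a b * b%:R * mu false * f a b.-1)
    - \sum_(a < n1.+1) \sum_(b < n2.+1) f a b * inflow a b.
  rewrite -sumrB; apply: eq_bigr => a _; rewrite -sumrB; apply: eq_bigr => b _.
  by rewrite /inflow -(p_bal a b (ltn_ord a) (ltn_ord b)) /generator; ring.
apply/eqP; rewrite subr_eq0; apply/eqP.
under eq_bigr => a _ do rewrite !big_split /=.
under [RHS]eq_bigr => a _ do under eq_bigr => b _ do rewrite !mulrDr.
under [RHS]eq_bigr => a _ do rewrite !big_split /=.
rewrite !big_split /=.
congr (_ + _ + _ + _).
- rewrite (big_ord_shift_up
    (F := fun a c => \sum_(b < n2.+1) p a b * (n1 - a)%:R * lam true * f c b)) /=.
    apply: eq_bigr => -[[|a] _] _ /=; first by rewrite big1 // => b _; rewrite mulr0.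
    by apply: eq_bigr => b _; ring.
  by apply: big1 => b _; rewrite subnn mulr0 !mul0r.
- rewrite (big_ord_shift_down
    (F := fun a c => \sum_(b < n2.+1) p a b * a%:R * mu true * f c b)) /=.
  + by apply: eq_bigr => a _; apply: eq_bigr => b _; ring.
  + by apply: big1 => b _; rewrite mulr0 !mul0r.
  + by apply: big1 => b _; rewrite p_supp ?mul0r //; left.
- apply: eq_bigr => a _.
  rewrite (big_ord_shift_up (F := fun b c => p a b * (n2 - b)%:R * lam false * f a c)) /=.
    by apply: eq_bigr => -[[|b] _] _ /=; [rewrite mulr0 | ring].
  by rewrite subnn mulr0 !mul0r.
- apply: eq_bigr => a _.
  rewrite (big_ord_shift_down (F := fun b c => p a b * b%:R * mu false * f a c)) /=.
  + by apply: eq_bigr => b _; ring.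
  + by rewrite mulr0 !mul0r.
  + by rewrite p_supp ?mul0r //; right.
Qed.

Lemma expect_cst c : expect n1 n2 p (fun _ _ => c) = c.
Proof.
by rewrite -[RHS]mulr1 -expect1 -expectZ; apply: eq_expect => a b _ _; rewrite mulr1.
Qed.

Hypotheses (lam_gt0 : forall j, 0 < lam j) (mu_gt0 : forall j, 0 < mu j).

Let rate_neq0 j : lam j + mu j != 0.
Proof. by rewrite gt_eqF // addr_gt0. Qed.

Lemma expect_fst : expect n1 n2 p (fun a _ => a%:R) = n1%:R * online_prob lam mu true.
Proof.
have gen_fst a b : (a <= n1)%N -> (b <= n2)%N ->
    generator lam mu n1 n2 (fun a _ => a%:R) a b
    = n1%:R * lam true + - (lam true + mu true) * a%:R.
  by case: a => [|a] ha hb; rewrite /generator !natrB //=; ring.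
have := expect_generator (fun a _ => a%:R).
rewrite (eq_expect _ gen_fst) expectD !expectZ expect_cst => /solve_linear ->.
  by rewrite /online_prob; field; rewrite rate_neq0.
by rewrite oppr_eq0 rate_neq0.
Qed.

Lemma expect_fst_sqr : expect n1 n2 p (fun a _ => a%:R ^+ 2)
  = n1%:R * online_prob lam mu true * (1 + (n1%:R - 1) * online_prob lam mu true).
Proof.
have gen_sqr a b : (a <= n1)%N -> (b <= n2)%N ->
    generator lam mu n1 n2 (fun a _ => a%:R ^+ 2) a b
    = n1%:R * lam true + (2 * n1%:R * lam true - lam true + mu true) * a%:R
      + - (2 * (lam true + mu true)) * a%:R ^+ 2.
  by case: a => [|a] ha hb; rewrite /generator !natrB //=; ring.
have := expect_generator (fun a _ => a%:R ^+ 2).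
rewrite (eq_expect _ gen_sqr) !expectD !expectZ expect_cst expect_fst.
move=> /solve_linear ->; last by rewrite oppr_eq0 mulf_neq0 ?pnatr_eq0.
by rewrite /online_prob; field; rewrite rate_neq0.
Qed.
End StationaryExpectation.

Section JointMoments.
Variable R : realFieldType.
Implicit Types (lam mu : bool -> R) (p f : nat -> nat -> R).

Lemma is_stationary_swap lam mu n1 n2 p :
  is_stationary lam mu n1 n2 p ->
  is_stationary (fun j => lam (~~ j)) (fun j => mu (~~ j)) n2 n1 (fun a b => p b a).
Proof.
case=> p_supp p_ge0 p_sum1 p_bal; split => [a b ab_out|a b ha hb|//|a b ha hb].
- by apply: p_supp; case: ab_out; [right|left].
- exact: p_ge0.
- by rewrite exchange_big.
- transitivity (p b a * ((n1 - b)%:R * lam true + b%:R * mu true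
                        + (n2 - a)%:R * lam false + a%:R * mu false)); first by ring.
  by rewrite p_bal //=; ring.
Qed.

Lemma expect_swap n1 n2 p f :
  expect n2 n1 (fun a b => p b a) (fun a b => f b a) = expect n1 n2 p f.
Proof. exact: exchange_big. Qed.

Variables (lam mu : bool -> R) (n1 n2 : nat) (p : nat -> nat -> R).
Hypothesis p_stat : is_stationary lam mu n1 n2 p.
Hypotheses (lam_gt0 : forall j, 0 < lam j) (mu_gt0 : forall j, 0 < mu j).

Let p_swap_stat := is_stationary_swap p_stat.
Let lam_swap_gt0 j : 0 < lam (~~ j). Proof. exact: lam_gt0. Qed.
Let mu_swap_gt0 j : 0 < mu (~~ j). Proof. exact: mu_gt0. Qed.

Lemma expect_snd : expect n1 n2 p (fun _ b => b%:R) = n2%:R * online_prob lam mu false.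
Proof.
by rewrite -expect_swap (expect_fst p_swap_stat lam_swap_gt0 mu_swap_gt0).
Qed.

Let rate_neq0 j : lam j + mu j != 0.
Proof. by rewrite gt_eqF // addr_gt0. Qed.

Lemma expect_fst_snd : expect n1 n2 p (fun a b => a%:R * b%:R)
  = n1%:R * online_prob lam mu true * (n2%:R * online_prob lam mu false).
Proof.
have gen_mul a b : (a <= n1)%N -> (b <= n2)%N ->
    generator lam mu n1 n2 (fun a b => a%:R * b%:R) a b
    = n2%:R * lam false * a%:R + n1%:R * lam true * b%:R
      + - (lam true + mu true + (lam false + mu false)) * (a%:R * b%:R).
  by case: a => [|a] ha; case: b => [|b] hb; rewrite /generator !natrB //=; ring.
have := expect_generator p_stat (fun a b => a%:R * b%:R).
rewrite (eq_expect _ gen_mul) !expectD !expectZ (expect_fst p_stat) // expect_snd.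
move=> /solve_linear ->; last by rewrite oppr_eq0 gt_eqF // !addr_gt0.
by rewrite /online_prob; field; rewrite !rate_neq0 gt_eqF // !addr_gt0.
Qed.

Lemma expect_share_utility (al be : R) : (0 < n1)%N ->
  expect n1 n2 p (fun a b => a%:R / n1%:R * (al - be / tau R a b))
  = online_prob lam mu true * (al - be * (1 + (n1%:R - 1) * online_prob lam mu true
                                         + n2%:R * online_prob lam mu false)).
Proof.
move=> n1_gt0; have n1_neq0 : n1%:R != 0 :> R by rewrite pnatr_eq0 -lt0n.
rewrite (@eq_expect _ _ _ _ _ (fun a b => al / n1%:R * a%:R + - (be / n1%:R) * a%:R ^+ 2
                                  + - (be / n1%:R) * (a%:R * b%:R))); last first.
  (* [be / tau a b = be * (a + b)] also in the empty state, where [tau 0 0 = 1 / 0 = 0]. *)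
  by move=> a b _ _; rewrite /tau natrD div1r invrK; field.
rewrite !expectD !expectZ (expect_fst p_stat) // (expect_fst_sqr p_stat) // expect_fst_snd.
by field.
Qed.

End JointMoments.

Lemma V1_closed_form (R : realFieldType) (lam mu alpha beta : bool -> R) dT pst k n1 n2 :
  (forall j, 0 < lam j) -> (forall j, 0 < mu j) ->
  is_stationary lam mu n1 n2 (pst n1 n2) -> (0 < sel k n1 n2)%N ->
  V1 alpha beta dT pst k n1 n2
  = dT * (online_prob lam mu k
          * (alpha k - beta k * (1 + ((sel k n1 n2)%:R - 1) * online_prob lam mu k
                                 + (sel k n2 n1)%:R * online_prob lam mu (~~ k)))).
Proof.
move=> lam_gt0 mu_gt0 p_stat.
have -> : V1 alpha beta dT pst k n1 n2 = dT * expect n1 n2 (pst n1 n2)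
    (fun a b => (sel k a b)%:R / (sel k n1 n2)%:R * (alpha k - beta k / tau R a b)).
  by rewrite /V1; congr (_ * _); apply: eq_bigr => a _; apply: eq_bigr => b _; rewrite -mulrA.
case: k => /= n_gt0; congr (_ * _); first exact: expect_share_utility.
rewrite -expect_swap (@eq_expect _ _ _ _ _
  (fun a b => a%:R / n2%:R * (alpha false - beta false / tau R a b))).
  exact: (expect_share_utility (is_stationary_swap p_stat)).
by move=> a b _ _; rewrite /tau addnC.
Qed.

Section Binomial.
Variable R : realFieldType.

Definition binomial_pmf (m j : nat) (x : R) : R :=
  'C(m, j)%:R * x ^+ j * (1 - x) ^+ (m - j).

Lemma prod_choice_prob_set m (x : R) (A : {set 'I_m}) :
  \prod_i choice_prob x ([ffun i => i \in A] i) = x ^+ #|A| * (1 - x) ^+ (m - #|A|).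
Proof.
rewrite (bigID (mem A)) /= (eq_bigr (fun _ => x)) => [|i iA]; last by rewrite ffunE iA.
rewrite [X in _ * X](eq_bigr (fun _ => 1 - x)) => [|i /negbTE iA]; last by rewrite ffunE iA.
rewrite !prodr_const; congr (_ * _ ^+ _).
by have /(congr1 (subn^~ #|A|)) := cardC A; rewrite addKn card_ord.
Qed.

Lemma sum_choice_prob_count m j (x : R) :
  \sum_(c : {ffun 'I_m -> bool})
     (if (j == \sum_i nat_of_bool (c i))%N then \prod_i choice_prob x (c i) else 0)
  = binomial_pmf m j x.
Proof.
rewrite (reindex (fun A : {set 'I_m} => [ffun i => i \in A])) /=; last first.
  exists (fun c : {ffun 'I_m -> bool} => [set i | c i]) => [A|c] _.
    by apply/setP => i; rewrite inE ffunE.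
  by apply/ffunP => i; rewrite ffunE inE.
have count_set (A : {set 'I_m}) : (\sum_i nat_of_bool ([ffun i => i \in A] i))%N = #|A|.
  by rewrite -sum1_card [RHS]big_mkcond; apply: eq_bigr => i _; rewrite ffunE.
under eq_bigr => A _ do rewrite count_set prod_choice_prob_set.
rewrite -big_mkcond /= (eq_bigr (fun _ => x ^+ j * (1 - x) ^+ (m - j))) => [|A /eqP <-] //.
rewrite sumr_const /binomial_pmf -[LHS]mulr_natl mulrA; congr (_%:R * _ * _).
rewrite -[m in 'C(m, _)](card_ord m) -card_draws.
by apply: eq_card => A; rewrite !inE eq_sym.
Qed.

Lemma sum_binomial_pmf m (x : R) : \sum_(j < m.+1) binomial_pmf m j x = 1.
Proof.
have := exprDn (1 - x) x m; rewrite subrK expr1n => ->.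
by apply: eq_bigr => j _; rewrite /binomial_pmf; ring.
Qed.

Lemma binomial_pmf_mean m (x : R) :
  \sum_(j < m.+1) j%:R * binomial_pmf m j x = m%:R * x.
Proof.
case: m => [|m]; first by rewrite big_ord1 !mul0r.
rewrite big_ord_recl mul0r add0r.
transitivity (\sum_(j < m.+1) m.+1%:R * x * binomial_pmf m j x).
  apply: eq_bigr => j _; rewrite /binomial_pmf lift0 subSS exprS.
  by rewrite !mulrA -natrM -mul_bin_diag natrM; ring.
by rewrite -mulr_sumr sum_binomial_pmf mulr1.
Qed.

Lemma binomial_pmf_mean_affine M L (x y c0 c1 c2 : R) :
  \sum_(a < M.+1) \sum_(b < L.+1)
     binomial_pmf M a x * binomial_pmf L b y * (c0 + c1 * a%:R + c2 * b%:R)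
  = c0 + c1 * (M%:R * x) + c2 * (L%:R * y).
Proof.
transitivity (\sum_(a < M.+1) ((c0 + c2 * (L%:R * y)) * binomial_pmf M a x
                               + c1 * (a%:R * binomial_pmf M a x))).
  apply: eq_bigr => a _.
  rewrite (eq_bigr (fun b : 'I_L.+1 =>
      binomial_pmf M a x * (c0 + c1 * a%:R) * binomial_pmf L b y
      + binomial_pmf M a x * c2 * (b%:R * binomial_pmf L b y))) => [|b _]; last by ring.
  by rewrite big_split /= -!mulr_sumr sum_binomial_pmf binomial_pmf_mean; ring.
by rewrite big_split /= -!mulr_sumr sum_binomial_pmf binomial_pmf_mean; ring.
Qed.

Lemma prob_n_given_binomial (N : bool -> nat) (pi1 : bool -> R) k n1 n2 :
  prob_n_given N pi1 k n1 n2
  = (if sel k n1 n2 is a.+1 then binomial_pmf (N k).-1 a (pi1 k) else 0)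
    * binomial_pmf (N (~~ k)) (sel k n2 n1) (pi1 (~~ k)).
Proof.
rewrite /prob_n_given; case: (sel k n1 n2) => [|a].
  by rewrite mul0r big1 // => c _; rewrite big1.
rewrite -!sum_choice_prob_count mulr_suml; apply: eq_bigr => c _.
rewrite mulr_sumr; apply: eq_bigr => d _.
by rewrite eqSS; case: eqP; case: eqP; rewrite ?mulr0 ?mul0r.
Qed.

Lemma sel_sel k (a b : nat) : sel k (sel k a b) (sel k b a) = a.
Proof. by case: k. Qed.

Lemma sel_selC k (a b : nat) : sel k (sel k b a) (sel k a b) = b.
Proof. by case: k. Qed.

Lemma big_sel_reindex (N : bool -> nat) k (F : nat -> nat -> R) :
  \sum_(n1 < (N true).+1) \sum_(n2 < (N false).+1) F n1 n2
  = \sum_(a < (N k).+1) \sum_(b < (N (~~ k)).+1)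
      F (sel k (a : nat) (b : nat)) (sel k (b : nat) (a : nat)).
Proof. by case: k => //=; rewrite exchange_big. Qed.

Lemma sum_prob_n_given (N : bool -> nat) (pi1 : bool -> R) k (G : nat -> nat -> R) :
  (0 < N k)%N ->
  \sum_(n1 < (N true).+1) \sum_(n2 < (N false).+1)
     (if (1 <= sel k (n1 : nat) (n2 : nat))%N then prob_n_given N pi1 k n1 n2 * G n1 n2 else 0)
  = \sum_(a < (N k).-1.+1) \sum_(b < (N (~~ k)).+1)
      binomial_pmf (N k).-1 a (pi1 k) * binomial_pmf (N (~~ k)) b (pi1 (~~ k))
      * G (sel k a.+1 (b : nat)) (sel k (b : nat) a.+1).
Proof.
move=> Nk_gt0; rewrite (big_sel_reindex N k (fun n1 n2 =>
  if (1 <= sel k n1 n2)%N then prob_n_given N pi1 k n1 n2 * G n1 n2 else 0)) /=.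
case Nk: (N k) Nk_gt0 => [//|M] _ /=.
rewrite big_ord_recl big1 ?add0r => [|b _]; last by rewrite sel_sel.
apply: eq_bigr => a _; apply: eq_bigr => b _.
by rewrite sel_sel prob_n_given_binomial lift0 sel_sel sel_selC Nk.
Qed.

End Binomial.

Theorem lemma2 (R : realFieldType) (k : bool) (N : bool -> nat)
    (lam mu alpha beta pi1 : bool -> R) (pik' dT ps q : R)
    (pst : nat -> nat -> nat -> nat -> R) :
  (0 < N k)%N ->
  (forall j, 0 < lam j) -> (forall j, 0 < mu j) ->
  (forall j, 0 <= pi1 j <= 1) -> 0 <= pik' <= 1 ->
  0 < dT -> 0 <= ps -> 0 <= q ->
  (forall n1 n2, is_stationary lam mu n1 n2 (pst n1 n2)) ->
  Uk N pi1 pik' alpha beta dT pst k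
    = pik' * dT * (lam k / (lam k + mu k))
      * (alpha k - beta k * (1 + lam k * ((N k)%:R - 1) / (lam k + mu k) * pi1 k
                               + lam (~~ k) * (N (~~ k))%:R / (lam (~~ k) + mu (~~ k))
                                 * pi1 (~~ k)))
  /\ Ck N pi1 pik' ps q dT pst k = pik' * (ps + q * Bhat N pi1 dT pst k).
Proof.
move=> Nk_gt0 lam_gt0 mu_gt0 _ _ _ _ _ p_stat; split.
- set r := online_prob lam mu.
  rewrite /Uk (@sum_prob_n_given R N pi1 k (V1 alpha beta dT pst k) Nk_gt0).
  transitivity (pik' * \sum_(a < (N k).-1.+1) \sum_(b < (N (~~ k)).+1)
     binomial_pmf (N k).-1 a (pi1 k) * binomial_pmf (N (~~ k)) b (pi1 (~~ k))
     * (dT * r k * (alpha k - beta k) + - (dT * r k * beta k * r k) * a%:R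
        + - (dT * r k * beta k * r (~~ k)) * b%:R)).
    congr (_ * _); apply: eq_bigr => a _; apply: eq_bigr => b _.
    rewrite (V1_closed_form _ _ _ lam_gt0 mu_gt0 (p_stat _ _)) sel_sel // sel_selC -/r.
    ring.
  have rate_neq0 j : lam j + mu j != 0 by rewrite gt_eqF // addr_gt0.
  have Nk_pred : (N k)%:R - 1 = (N k).-1%:R :> R.
    by rewrite -{1}(prednK Nk_gt0) -natr1 addrK.
  rewrite binomial_pmf_mean_affine Nk_pred /r /online_prob.
  by field; rewrite !rate_neq0.
- rewrite /Ck /Bhat (@sum_prob_n_given R N pi1 k (fun n1 n2 => q * B1 dT pst k n1 n2) Nk_gt0).
  rewrite big_add1 big_mkord mulr_sumr.
  case: (N k) Nk_gt0 => [//|M] _ /=.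
  congr (_ * (_ + _)); apply: eq_bigr => a _; rewrite big_mkord mulr_sumr.
  by apply: eq_bigr => b _; rewrite /binomial_pmf subSS; ring.
Qed.
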